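(* Let $M$ be a free $\mathbb{T}$-module with a finite $\mathbb{T}$-basis, $V$ its associated complex vector space, $(\cdot,\cdot)$ a bicomplex scalar product on $M$ which is hyperbolic positive and closed on $V$, $\|\cdot\|$ the norm on $M$ defined below, and $d(\widehat X,\widehat Y):=\|\widehat X-\widehat Y\|$. Then for all $\widehat X,\widehat Y\in M$: 1. $\|\widehat X\|\ge 0$; 2. $\|\widehat X\|=0\iff\widehat X=0$; 3. $\|\alpha\widehat X\|=|\alpha|\,\|\widehat X\|$ for all $\alpha\in\mathbb{C}(\mathbf{i_1})$ or $\alpha\in\mathbb{C}(\mathbf{i_2})$; 4. $\|\alpha\widehat X\|\le\sqrt2\,|\alpha|_{\mathbf 3}\,\|\widehat X\|$ for all $\alpha\in\mathbb{T}$; 5. $\|\widehat X+\widehat Y\|\le\|\widehat X\|+\|\widehat Y\|$; 6. $(M,d)$ is a metric space.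
   Context: Bicomplex numbers: $\mathbb{T}=\{z_1+z_2\mathbf{i_2}: z_1,z_2\in\mathbb{C}(\mathbf{i_1})\}$, $\mathbb{C}(\mathbf{i_k})=\{x+y\mathbf{i_k}: x,y\in\mathbb{R}\}$ ($k=1,2$), $\mathbf{i_1}^2=\mathbf{i_2}^2=-1$, $\mathbf{i_1}\mathbf{i_2}=\mathbf{i_2}\mathbf{i_1}=\mathbf{j}$, $\mathbf{j}^2=1$ (commutative). Hyperbolic numbers $\mathbb{D}=\{x+y\mathbf{j}:x,y\in\mathbb{R}\}$. Idempotents $\mathbf{e_1}=(1+\mathbf{j})/2$, $\mathbf{e_2}=(1-\mathbf{j})/2$. For $w=z_1+z_2\mathbf{i_2}$, $|w|_{\mathbf 3}=|w|=\sqrt{|z_1|^2+|z_2|^2}$ (Euclidean norm in $\mathbb{R}^4$); for $\alpha=x+y\mathbf{i_k}$, $|\alpha|=\sqrt{x^2+y^2}$. Conjugation: $(z_1+z_2\mathbf{i_2})^{\dagger_3}=\overline{z_1}-\overline{z_2}\mathbf{i_2}$. $\mathbb{D}^+=\{a\mathbf{e_1}+b\mathbf{e_2}: a,b\ge 0\}$, and $(a\mathbf{e_1}+b\mathbf{e_2})^{1/2}=\sqrt a\,\mathbf{e_1}+\sqrt b\,\mathbf{e_2}$. $M$ has $\mathbb{T}$-basis $\{\widehat m_1,\dots,\widehat m_n\}$, $V=\{\sum x_l\widehat m_l: x_l\in\mathbb{C}(\mathbf{i_1})\}$; for $\widehat X=\sum x_l\widehat m_l$ with $x_l=x_{1l}\mathbf{e_1}+x_{2l}\mathbf{e_2}$,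 $x_{kl}\in\mathbb{C}(\mathbf{i_1})$, put $\widehat X_{\mathbf{e_k}}=\sum_l x_{kl}\widehat m_l\in V$. A bicomplex scalar product is a map $(\cdot,\cdot):M\times M\to\mathbb{T}$ with: $(\widehat X,\widehat Y_1+\widehat Y_2)=(\widehat X,\widehat Y_1)+(\widehat X,\widehat Y_2)$; $(\widehat X,\alpha\widehat Y)=\alpha(\widehat X,\widehat Y)$ for $\alpha\in\mathbb{T}$; $(\widehat X,\widehat Y)=(\widehat Y,\widehat X)^{\dagger_3}$; $(\widehat X,\widehat X)=0\iff\widehat X=0$. Hyperbolic positive: $(\widehat X,\widehat X)\in\mathbb{D}^+$ for all $\widehat X$. Closed on $V$: $(\widehat X,\widehat Y)\in\mathbb{C}(\mathbf{i_1})$ for $\widehat X,\widehat Y\in V$. For $\widehat Z\in V$, $\|\widehat Z\|=(\widehat Z,\widehat Z)^{1/2}$. For $\widehat X\in M$, $\|\widehat X\|:=\big|(\widehat X,\widehat X)^{1/2}\big|=\big|\mathbf{e_1}\|\widehat X_{\mathbf{e_1}}\|+\mathbf{e_2}\|\widehat X_{\mathbf{e_2}}\|\big|=\big((\|\widehat X_{\mathbf{e_1}}\|^2+\|\widehat X_{\mathbf{e_2}}\|^2)/2\big)^{1/2}$. *)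

From HB Require Import structures.
From mathcomp Require Import all_boot all_order all_algebra.
From mathcomp Require Import complex.
Set Implicit Arguments. Unset Strict Implicit. Unset Printing Implicit Defensive.
Import Order.TTheory GRing.Theory Num.Theory.
Local Open Scope ring_scope.

(* Bicomplex numbers T = C(i1)[i2]: w = z1 + z2 i2 is represented as
   Complex z1 z2 : R[i][i], with z1 z2 : R[i] = C(i1).  The ring structure
   of R[i][i] is exactly the bicomplex multiplication (i1 i2 = i2 i1,
   i1^2 = i2^2 = -1). *)
Definition bicomplex (R : rcfType) := complex (complex R).

Section Bicomplex.
Variable R : rcfType.
Local Notation C := (complex R).
Local Notation T := (bicomplex R).

Definition inC1 (z : C) : T := Complex z 0.
Definition realT (a : R) : T := inC1 (Complex a 0).
Definition bi1 : T := Complex (Complex 0 1) 0.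
Definition bi2 : T := Complex 0 1.
Definition bj : T := bi1 * bi2.
Definition inCi1 (w : T) : Prop := exists x y : R, w = realT x + realT y * bi1.
Definition inCi2 (w : T) : Prop := exists x y : R, w = realT x + realT y * bi2.
Definition be1 : T := realT (2%:R)^-1 * (1 + bj).
Definition be2 : T := realT (2%:R)^-1 * (1 - bj).
Definition inDplus (w : T) : Prop :=
  exists a b : R, 0 <= a /\ 0 <= b /\ w = realT a * be1 + realT b * be2.
Definition normT (w : T) : R :=
  let: Complex z1 z2 := w in
  let: Complex a b := z1 in let: Complex c d := z2 in
  Num.sqrt (a ^+ 2 + b ^+ 2 + c ^+ 2 + d ^+ 2).
Definition conj3 (w : T) : T :=
  let: Complex z1 z2 := w in Complex (conjc z1) (- conjc z2).
(* idempotent components: w = idemp1 w e1 + idemp2 w e2, with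
   idemp1 w = z1 - z2 i1, idemp2 w = z1 + z2 i1 *)
Definition idemp1 (w : T) : C := let: Complex z1 z2 := w in z1 - z2 * Complex 0 1.
Definition idemp2 (w : T) : C := let: Complex z1 z2 := w in z1 + z2 * Complex 0 1.
(* square root on D^+: (a e1 + b e2)^(1/2) = sqrt a e1 + sqrt b e2 *)
Definition sqrtD (w : T) : T :=
  realT (Num.sqrt (complex.Re (idemp1 w))) * be1 +
  realT (Num.sqrt (complex.Re (idemp2 w))) * be2.
End Bicomplex.

Section Module.
Variable R : rcfType.
Local Notation T := (bicomplex R).
Variable M : lmodType T.

Definition is_Tbasis (n : nat) (m : 'I_n -> M) : Prop :=
  (forall X : M, exists x : 'I_n -> T, X = \sum_(l < n) x l *: m l) /\
  (forall x : 'I_n -> T, \sum_(l < n) x l *: m l = 0 -> forall l, x l = 0).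

Definition inV (n : nat) (m : 'I_n -> M) (X : M) : Prop :=
  exists x : 'I_n -> complex R, X = \sum_(l < n) inC1 (x l) *: m l.

Definition bicomplex_scalar_product (sp : M -> M -> T) : Prop :=
  [/\ forall X Y1 Y2, sp X (Y1 + Y2) = sp X Y1 + sp X Y2,
      forall X Y (a : T), sp X (a *: Y) = a * sp X Y,
      forall X Y, sp X Y = conj3 (sp Y X) &
      forall X, sp X X = 0 <-> X = 0].

Definition hyperbolic_positive (sp : M -> M -> T) : Prop :=
  forall X, inDplus (sp X X).

Definition closed_on_V (n : nat) (m : 'I_n -> M) (sp : M -> M -> T) : Prop :=
  forall X Y, inV m X -> inV m Y -> exists z : complex R, sp X Y = inC1 z.

Definition normM (sp : M -> M -> T) (X : M) : R := normT (sqrtD (sp X X)).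

Definition distM (sp : M -> M -> T) (X Y : M) : R := normM sp (X - Y).

Definition is_metric (d : M -> M -> R) : Prop :=
  [/\ forall X Y, 0 <= d X Y,
      forall X Y, d X Y = 0 <-> X = Y,
      forall X Y, d X Y = d Y X &
      forall X Y Z, d X Z <= d X Y + d Y Z].
End Module.

From HB Require Import structures.
From mathcomp Require Import all_boot all_order all_algebra.
From mathcomp Require Import complex.
From mathcomp Require Import ring lra.
Set Implicit Arguments. Unset Strict Implicit. Unset Printing Implicit Defensive.
Import Order.TTheory GRing.Theory Num.Theory.
Local Open Scope ring_scope.

(* The self-product (X, X) = a e1 + b e2 with a, b >= 0 is the hyperbolic number
   x + y j with x = (a + b)/2 and |y| <= x, and |(X, X)^(1/2)|^2 = (a + b)/2 = x.
   So ||X||^2 is the real part of (X, X), and (X, Y) |-> Re (X, Y) is a symmetric,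
   positive definite R-bilinear form on M: Cauchy-Schwarz gives the triangle
   inequality and hence the metric.  For a scalar a = z1 + z2 i2,
   (a X, a X) = a† a (X, X) with a† a = |a|^2 + k j, where the cross term
   k = 2 Im(conj z1 z2) satisfies |k| <= |a|^2 and vanishes on C(i1) and C(i2).
   Taking real parts, ||a X||^2 = |a|^2 ||X||^2 + k y with |y| <= ||X||^2,
   which gives the two scaling statements. *)

Lemma quadratic_ge0_discr (R : realFieldType) (A B C : R) : 0 <= C ->
  (forall r, 0 <= A + 2%:R * r * B + r ^+ 2 * C) -> B ^+ 2 <= A * C.
Proof.
move=> C_ge0 quad_ge0; have [C0|C_neq0] := eqVneq C 0.
  have [->|B_neq0] := eqVneq B 0; first by rewrite expr0n C0 mulr0.
  have := quad_ge0 (- (A + 1) / (2%:R * B)).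
  have -> : A + 2%:R * (- (A + 1) / (2%:R * B)) * B + (- (A + 1) / (2%:R * B)) ^+ 2 * C = -1.
    by rewrite C0; field; rewrite B_neq0.
  by rewrite ler0N1.
have C_gt0 : 0 < C by rewrite lt_neqAle eq_sym C_neq0.
have := quad_ge0 (- (B / C)).
have -> : A + 2%:R * - (B / C) * B + (- (B / C)) ^+ 2 * C = A - B ^+ 2 / C.
  by field; rewrite C_neq0.
by rewrite subr_ge0 ler_pdivrMr // mulrC.
Qed.

Lemma sqrtrD_le (R : rcfType) (x y b : R) : 0 <= x -> 0 <= y -> b ^+ 2 <= x * y ->
  Num.sqrt (x + 2%:R * b + y) <= Num.sqrt x + Num.sqrt y.
Proof.
move=> x_ge0 y_ge0 b_le.
rewrite -(ger0_norm (addr_ge0 (sqrtr_ge0 x) (sqrtr_ge0 y))) -sqrtr_sqr ler_wsqrtr //.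
have b_le_sqrt : b <= Num.sqrt x * Num.sqrt y.
  by rewrite -sqrtrM // (le_trans (ler_norm b)) // -sqrtr_sqr ler_wsqrtr.
by rewrite sqrrD !sqr_sqrtr //; lra.
Qed.

Local Ltac bicomplex_congr := simpc; congr (Complex (Complex _ _) (Complex _ _)).
Local Ltac bicomplex_ring := bicomplex_congr; ring.

Section Bicomplex.
Variable R : rcfType.
Local Notation T := (bicomplex R).
Implicit Types (a w : T) (r x y u v : R).

Definition hyperbolic x y : T := realT x + realT y * bj R.

Definition reT w : R := complex.Re (complex.Re w).

Definition crossT a : R := let: Complex z1 z2 := a in 2%:R * complex.Im (conjc z1 * z2).

Lemma hyperbolicE x y : hyperbolic x y = Complex (Complex x 0) (Complex 0 y).
Proof. by rewrite /hyperbolic /realT /inC1 /bj /bi1 /bi2; bicomplex_ring. Qed.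

Lemma reT_hyperbolic x y : reT (hyperbolic x y) = x.
Proof. by rewrite hyperbolicE. Qed.

Lemma reT_hyperbolicM x y u v : reT (hyperbolic x y * hyperbolic u v) = x * u + y * v.
Proof. rewrite !hyperbolicE /reT; simpc => /=; ring. Qed.

Lemma reTD w1 w2 : reT (w1 + w2) = reT w1 + reT w2.
Proof. by case: w1 w2 => [[? ?] ?] [[? ?] ?]. Qed.

Lemma reT_realTM r w : reT (realT r * w) = r * reT w.
Proof. case: w => [[? ?] [? ?]]; rewrite /realT /inC1 /reT; simpc => /=; ring. Qed.

Lemma reT_conj3 w : reT (conj3 w) = reT w.
Proof. by case: w => [[? ?] ?]. Qed.

Lemma conj3D w1 w2 : conj3 (w1 + w2) = conj3 w1 + conj3 w2.
Proof. by case: w1 w2 => [[? ?] [? ?]] [[? ?] [? ?]] /=; bicomplex_ring. Qed.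

Lemma conj3M w1 w2 : conj3 (w1 * w2) = conj3 w1 * conj3 w2.
Proof. by case: w1 w2 => [[? ?] [? ?]] [[? ?] [? ?]] /=; bicomplex_ring. Qed.

Lemma conj3_realT r : conj3 (realT r) = realT r.
Proof. by rewrite /realT /inC1 /=; bicomplex_ring. Qed.

Lemma normT_ge0 a : 0 <= normT a.
Proof. by case: a => [[? ?] [? ?]]; apply: sqrtr_ge0. Qed.

Lemma conj3_mul_self a : conj3 a * a = hyperbolic (normT a ^+ 2) (crossT a).
Proof.
case: a => [[p q] [r s]]; rewrite hyperbolicE /= sqr_sqrtr ?addr_ge0 ?sqr_ge0 //.
by bicomplex_ring.
Qed.

Lemma crossT_le a : `|crossT a| <= normT a ^+ 2.
Proof.
case: a => [[p q] [r s]] /=; rewrite sqr_sqrtr ?addr_ge0 ?sqr_ge0 //; simpc => /=.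
rewrite ler_norml; apply/andP; split.
  by have := sqr_ge0 (p + s); have := sqr_ge0 (q - r); nra.
by have := sqr_ge0 (p - s); have := sqr_ge0 (q + r); nra.
Qed.

Lemma crossT_Ci a : inCi1 a \/ inCi2 a -> crossT a = 0.
Proof.
by case=> -[x [y ->]]; rewrite /realT /inC1 /bi1 /bi2; simpc => /=; ring.
Qed.

Lemma Dplus_hyperbolic w : inDplus w -> exists x y, w = hyperbolic x y /\ `|y| <= x.
Proof.
case=> a [b [a_ge0 [b_ge0 ->]]]; exists ((a + b) / 2%:R), ((a - b) / 2%:R); split.
  by rewrite hyperbolicE /be1 /be2 /realT /inC1 /bj /bi1 /bi2; bicomplex_congr; field.
by rewrite ler_norml; apply/andP; split; lra.
Qed.

Lemma normT_sqrtD_hyperbolic x y : `|y| <= x -> normT (sqrtD (hyperbolic x y)) = Num.sqrt x.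
Proof.
rewrite ler_norml => /andP[ge_Ny le_y].
have xy_ge0 : 0 <= x + y by lra.
have xNy_ge0 : 0 <= x - y by lra.
(* (x + y j)^(1/2) = (s + t)/2 + ((s - t)/2) j with s^2 = x + y and t^2 = x - y *)
rewrite hyperbolicE /sqrtD /=; simpc => /=; congr Num.sqrt.
move: (sqr_sqrtr xy_ge0) (sqr_sqrtr xNy_ge0).
move: (Num.sqrt (x + y)) (Num.sqrt (x - y)) => s t s2 t2.
rewrite [RHS](_ : x = (x + y + (x - y)) / 2%:R); last by field.
by rewrite -s2 -t2; field.
Qed.

End Bicomplex.

Section ScalarProduct.
Variables (R : rcfType) (M : lmodType (bicomplex R)) (sp : M -> M -> bicomplex R).
Hypotheses (sp_scalar : bicomplex_scalar_product sp) (sp_pos : hyperbolic_positive sp).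
Implicit Types (X Y : M) (a : bicomplex R) (r : R).

Lemma spDr X Y1 Y2 : sp X (Y1 + Y2) = sp X Y1 + sp X Y2.
Proof. by case: sp_scalar. Qed.

Lemma spZr X Y a : sp X (a *: Y) = a * sp X Y.
Proof. by case: sp_scalar. Qed.

Lemma sp_conj3 X Y : sp X Y = conj3 (sp Y X).
Proof. by case: sp_scalar. Qed.

Lemma sp_self_eq0 X : sp X X = 0 <-> X = 0.
Proof. by case: sp_scalar. Qed.

Lemma spDl X1 X2 Y : sp (X1 + X2) Y = sp X1 Y + sp X2 Y.
Proof. by rewrite sp_conj3 spDr conj3D -!sp_conj3. Qed.

Lemma spZl X Y a : sp (a *: X) Y = conj3 a * sp X Y.
Proof. by rewrite sp_conj3 spZr conj3M -sp_conj3. Qed.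

Lemma sp_scale_self a X :
  sp (a *: X) (a *: X) = hyperbolic (normT a ^+ 2) (crossT a) * sp X X.
Proof. by rewrite spZl spZr mulrA conj3_mul_self. Qed.

Lemma sp_self_hyperbolic X :
  exists2 y, sp X X = hyperbolic (reT (sp X X)) y & `|y| <= reT (sp X X).
Proof.
have [x [y [-> le_y_x]]] := Dplus_hyperbolic (sp_pos X).
by exists y; rewrite reT_hyperbolic.
Qed.

Lemma reT_sp_ge0 X : 0 <= reT (sp X X).
Proof. by have [y _ le_y] := sp_self_hyperbolic X; apply: le_trans le_y. Qed.

Lemma reT_sp_eq0 X : reT (sp X X) = 0 -> X = 0.
Proof.
move=> reT0; apply/sp_self_eq0.
have [y XX_hyp] := sp_self_hyperbolic X; rewrite reT0 normr_le0 => /eqP y0.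
by rewrite XX_hyp reT0 y0 hyperbolicE.
Qed.

Lemma reT_spC X Y : reT (sp X Y) = reT (sp Y X).
Proof. by rewrite sp_conj3 reT_conj3. Qed.

Lemma reT_sp_expand X Y r :
  reT (sp (X + realT r *: Y) (X + realT r *: Y)) =
  reT (sp X X) + 2%:R * r * reT (sp X Y) + r ^+ 2 * reT (sp Y Y).
Proof.
rewrite !(spDl, spDr, spZl, spZr) conj3_realT !(reTD, reT_realTM) [reT (sp Y X)]reT_spC.
ring.
Qed.

Lemma reT_sp_Cauchy_Schwarz X Y : reT (sp X Y) ^+ 2 <= reT (sp X X) * reT (sp Y Y).
Proof.
apply: quadratic_ge0_discr => [|r]; first exact: reT_sp_ge0.
by rewrite -reT_sp_expand reT_sp_ge0.
Qed.

Lemma reT_spZ a X : exists2 y,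
  reT (sp (a *: X) (a *: X)) = normT a ^+ 2 * reT (sp X X) + crossT a * y &
  `|y| <= reT (sp X X).
Proof.
have [y XX_hyp le_y] := sp_self_hyperbolic X.
by exists y; rewrite // sp_scale_self {1}XX_hyp reT_hyperbolicM.
Qed.

Lemma normM_sqrt X : normM sp X = Num.sqrt (reT (sp X X)).
Proof.
have [y XX_hyp le_y] := sp_self_hyperbolic X.
by rewrite /normM {1}XX_hyp normT_sqrtD_hyperbolic.
Qed.

Lemma normM_ge0 X : 0 <= normM sp X.
Proof. by rewrite normM_sqrt sqrtr_ge0. Qed.

Lemma normM_eq0 X : normM sp X = 0 <-> X = 0.
Proof.
split=> [|->]; last by rewrite normM_sqrt (sp_self_eq0 0).2 // sqrtr0.
rewrite normM_sqrt => /eqP; rewrite sqrtr_eq0 => le_reT0.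
by apply: reT_sp_eq0; apply/eqP; rewrite eq_le le_reT0 reT_sp_ge0.
Qed.

Lemma normMZ_Ci a X : inCi1 a \/ inCi2 a -> normM sp (a *: X) = normT a * normM sp X.
Proof.
move=> /crossT_Ci cross0; rewrite !normM_sqrt; have [y -> _] := reT_spZ a X.
by rewrite cross0 mul0r addr0 sqrtrM ?sqr_ge0 // sqrtr_sqr ger0_norm ?normT_ge0.
Qed.

Lemma ler_normMZ a X : normM sp (a *: X) <= Num.sqrt 2%:R * normT a * normM sp X.
Proof.
rewrite !normM_sqrt; have [y -> le_y] := reT_spZ a X.
have cross_le : crossT a * y <= normT a ^+ 2 * reT (sp X X).
  by rewrite (le_trans (ler_norm _)) // normrM ler_pM ?crossT_le.
rewrite [in X in _ <= X](_ : normT a = Num.sqrt (normT a ^+ 2)); last first.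
  by rewrite sqrtr_sqr ger0_norm ?normT_ge0.
by rewrite -!sqrtrM ?ler0n ?mulr_ge0 ?sqr_ge0 ?normT_ge0 //; apply: ler_wsqrtr; lra.
Qed.

Lemma ler_normMD X Y : normM sp (X + Y) <= normM sp X + normM sp Y.
Proof.
have := reT_sp_expand X Y 1; rewrite (_ : realT 1 = 1) // scale1r mulr1 expr1n mul1r.
rewrite !normM_sqrt => ->; apply: sqrtrD_le; rewrite ?reT_sp_ge0 //.
exact: reT_sp_Cauchy_Schwarz.
Qed.

Lemma normMN X : normM sp (- X) = normM sp X.
Proof.
rewrite /normM -scaleN1r spZl spZr mulrA.
by rewrite (_ : conj3 (-1) * -1 = 1) ?mul1r //=; simpc.
Qed.

Lemma distM_metric : is_metric (distM sp).
Proof.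
rewrite /distM; split=> [X Y|X Y|X Y|X Y Z].
- exact: normM_ge0.
- by rewrite normM_eq0; split=> [/subr0_eq|->]; rewrite ?subrr.
- by rewrite -normMN opprB.
- by rewrite -(subrKA Y X (- Z)) ler_normMD.
Qed.

End ScalarProduct.

Theorem mainTheorem10 (R : rcfType) (M : lmodType (bicomplex R))
  (n : nat) (m : 'I_n -> M) (sp : M -> M -> bicomplex R) :
  is_Tbasis m ->
  bicomplex_scalar_product sp ->
  hyperbolic_positive sp ->
  closed_on_V m sp ->
  (forall X Y : M,
    [/\ 0 <= normM sp X,
        normM sp X = 0 <-> X = 0,
        (forall alpha : bicomplex R, inCi1 alpha \/ inCi2 alpha ->
           normM sp (alpha *: X) = normT alpha * normM sp X),
        (forall alpha : bicomplex R,
           normM sp (alpha *: X) <= Num.sqrt 2%:R * normT alpha * normM sp X) &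
        normM sp (X + Y) <= normM sp X + normM sp Y]) /\
  is_metric (distM sp).
Proof.
(* In the paper the basis and the closedness on V serve to compute ||X|| from
   the components X_e1, X_e2; normM is |(X, X)^(1/2)| directly. *)
move=> _ sp_scalar sp_pos _; split; last exact: distM_metric.
move=> X Y; split.
- exact: normM_ge0.
- exact: normM_eq0.
- by move=> a; apply: normMZ_Ci.
- by move=> a; apply: ler_normMZ.
- exact: ler_normMD.
Qed.
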